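(* Consider an insertion-only edge stream and the reservoir sample $\mathcal{S}$ of capacity $M\ge 6$ (as described in the context). Let $\lambda=\{\ell_1,\ell_2,\ell_3\}$ and $\gamma=\{g_1,g_2,g_3\}$ be two triangles sharing no edge, where the edges of each are numbered in their order of arrival on the stream, and assume the last edge of $\lambda$ arrives on the stream before the last edge of $\gamma$, i.e. $t_\lambda<t_\gamma$. Let $D_\lambda$ be the event that $\ell_1$ and $\ell_2$ are both in $\mathcal{S}$ at the end of time step $t_\lambda-1$, and $D_\gamma$ the event that $g_1$ and $g_2$ are both in $\mathcal{S}$ at the end of time step $t_\gamma-1$. Then \[ \Pr(D_\gamma\mid D_\lambda)\le\Pr(D_\gamma). \]
   Context: An insertion-only edge stream: at each time step $t=1,2,\dots$ an edge $e_t$ between two distinct vertices arrives, which is not already present. A triangle is a set of three edges $\{\{u,v\},\{v,w\},\{w,u\}\}$ with $u,v,w$ distinct. For a triangle $\lambda$, $t_\lambda$ is the time step at which its last edge arrives. Reservoir sampling with capacity $M$: the sample $\mathcal{S}$ starts empty; at time $t$, if $t\le M$ the edge $e_t$ is inserted; if $t>M$, with probability $M/t$ an edge chosen uniformly at random from $\mathcal{S}$ is removed and $e_t$ is inserted, otherwise $\mathcal{S}$ is unchanged. *)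

(* Reservoir sampling over an insertion-only edge stream,
   modelled as an explicit finite discrete probability distribution (with
   rational weights) over the trajectories S_0, S_1, ..., S_T of the sample. *)
From mathcomp Require Import all_boot all_order all_algebra.
Set Implicit Arguments. Unset Strict Implicit. Unset Printing Implicit Defensive.
Import GRing.Theory Num.Theory.
Local Open Scope ring_scope.

(* An edge is a 2-element vertex set; the stream is a list of edges,
   e_t = nth set0 str (t-1) for t = 1 .. size str. *)
Definition sedge (V : finType) (str : seq {set V}) (t : nat) : {set V} :=
  nth set0 str t.-1.

Definition valid_stream (V : finType) (str : seq {set V}) : Prop :=
  uniq str /\ all (fun e : {set V} => #|e| == 2%N) str.

(* the edges arriving at times i < j < k form a triangle (so they are
   numbered l1, l2, l3 in order of arrival, and t_lambda = k) *)
Definition is_triangle (V : finType) (str : seq {set V}) (i j k : nat) : Prop :=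
  [/\ (0 < i)%N, (i < j)%N, (j < k)%N, (k <= size str)%N &
   exists u v w : V, [/\ u != v, v != w, w != u &
     [set sedge str i; sedge str j; sedge str k] =
     [set [set u; v]; [set v; w]; [set w; u]]]].

Definition tri_edges (V : finType) (str : seq {set V}) (i j k : nat) : {set {set V}} :=
  [set sedge str i; sedge str j; sedge str k].

Definition rstep (V : finType) (M t : nat) (e : {set V}) (S : seq {set V})
  : seq (seq {set V} * rat) :=
  if (t <= M)%N then [:: (e :: S, 1)]
  else (S, 1 - M%:R / t%:R) ::
       [seq (e :: rem x S, M%:R / t%:R * (size S)%:R^-1) | x <- S].

(* Distribution over trajectories [:: S_0; ...; S_n] (S_0 empty),
   S_t = sample at the end of time step t. *)
Fixpoint rpaths (V : finType) (M : nat) (str : seq {set V}) (n : nat)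
  : seq (seq (seq {set V}) * rat) :=
  match n with
  | 0 => [:: ([:: [::]], 1)]
  | n'.+1 =>
    flatten [seq [seq (rcons p.1 q.1, p.2 * q.2)
                 | q <- rstep M n (sedge str n) (last [::] p.1)]
            | p <- rpaths M str n']
  end.

Definition Pr (V : finType) (M : nat) (str : seq {set V})
  (E : seq (seq {set V}) -> bool) : rat :=
  \sum_(p <- rpaths M str (size str)) (E p.1)%:R * p.2.

Definition sample_at (V : finType) (P : seq (seq {set V})) (t : nat) : seq {set V} :=
  nth [::] P t.

Definition Pr_cond (V : finType) (M : nat) (str : seq {set V})
  (A B : seq (seq {set V}) -> bool) : rat :=
  Pr M str (fun P => A P && B P) / Pr M str B.

Definition D_event (V : finType) (str : seq {set V}) (i j k : nat)
  (P : seq (seq {set V})) : bool :=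
  (sedge str i \in sample_at P k.-1) && (sedge str j \in sample_at P k.-1).

From mathcomp Require Import all_boot all_order all_algebra.
From mathcomp Require Import zify ring.
Import Order.TTheory GRing.Theory Num.Theory.
Local Open Scope ring_scope.
Set Implicit Arguments. Unset Strict Implicit. Unset Printing Implicit Defensive.

(* The event that a fixed set Z of edges lies in the sample evolves
   multiplicatively: given that Z minus the arriving edge e is sampled at time
   t-1, Z is sampled at time t with a probability depending only on t, on
   whether e lies in Z, and on the number k of other edges of Z.  These
   factors are submultiplicative in k, so by induction on time two disjoint
   sets of edges are negatively correlated in the sample at a common time.
   Continuing the induction on the later event while the earlier one stays
   frozen gives Pr(D_lambda /\ D_gamma) <= Pr(D_lambda) Pr(D_gamma). *)

Definition sampled (V : finType) (Z : {set {set V}}) (S : seq {set V}) : bool :=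
  [forall z in Z, z \in S].

Section Sampled.
Variable V : finType.
Implicit Types (Z X Y : {set {set V}}) (S : seq {set V}) (e : {set V}).

Lemma sampledP Z S : reflect {in Z, forall z, z \in S} (sampled Z S).
Proof. exact: forall_inP. Qed.

Lemma sampled0 S : sampled set0 S.
Proof. by apply/sampledP => z; rewrite inE. Qed.

Lemma sub_sampled Z' Z S : Z' \subset Z -> sampled Z S -> sampled Z' S.
Proof. by move=> /subsetP Z'Z /sampledP ZS; apply/sampledP => z /Z'Z /ZS. Qed.

Lemma sampledU X Y S : sampled (X :|: Y) S = sampled X S && sampled Y S.
Proof.
apply/sampledP/andP => [H|[/sampledP HX /sampledP HY] z].
  by split; apply/sampledP => z Hz; apply: H; rewrite inE Hz ?orbT.
by rewrite inE => /orP [/HX|/HY].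
Qed.

Lemma sampled2 e e' S : sampled [set e; e'] S = (e \in S) && (e' \in S).
Proof.
rewrite sampledU; congr (_ && _);
  by apply/sampledP/idP => [->|? z /set1P ->]; rewrite ?set11.
Qed.

Lemma sampled_cons Z e S : sampled Z (e :: S) = sampled (Z :\ e) S.
Proof.
apply/sampledP/sampledP => H z.
  by rewrite !inE => /andP [/negPf ne /H]; rewrite inE ne.
by rewrite inE; case: eqVneq => //= ne zZ; apply: H; rewrite !inE ne.
Qed.

Lemma sampled_rem Z x S : uniq S -> sampled Z (rem x S) = sampled Z S && (x \notin Z).
Proof.
move=> uS; apply/sampledP/andP => [H|[/sampledP H xZ] z zZ].
  by split; [apply/sampledP => z /H /mem_rem | apply/negP => /H; rewrite mem_rem_uniqF].
rewrite (mem_rem_uniq _ uS) inE (H z zZ) andbT.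
by apply: contraNneq xZ => <-.
Qed.

Lemma count_notin_sampled Z S : uniq S -> sampled Z S ->
  count [predC Z] S = (size S - #|Z|)%N /\ (#|Z| <= size S)%N.
Proof.
move=> uS /sampledP ZS.
have cardZ : count [in Z] S = #|Z|.
  rewrite -size_filter cardE; apply/perm_size/uniq_perm; [exact: filter_uniq | exact: enum_uniq |].
  by move=> x; rewrite mem_filter mem_enum andb_idr //; apply: ZS.
by have := count_predC [in Z] S; rewrite cardZ => <-; rewrite addKn leq_addr.
Qed.

End Sampled.

(* For t > M the arriving edge e is inserted with probability M/t and then
   evicts one of the M sampled edges uniformly, sparing the k sampled edges of
   Z :\ e with probability (M - k)/M; if e is not in Z, Z also survives when
   e is rejected. *)
Definition survival (M t : nat) (fresh : bool) (k : nat) : rat :=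
  if (t <= M)%N then 1
  else if fresh then (M - k)%:R / t%:R else (t - k)%:R / t%:R.

Lemma survival_ge0 M t fresh k : 0 <= survival M t fresh k.
Proof. by rewrite /survival; case: ifP => //; case: fresh => _; rewrite divr_ge0. Qed.

Lemma survival0 M t : (0 < t)%N -> survival M t false 0 = 1.
Proof. by move=> t0; rewrite /survival subn0 divff ?pnatr_eq0 -?lt0n //; case: ifP. Qed.

Lemma ler_ratio (a b c t : nat) : (0 < t)%N -> (a * t <= b * c)%N ->
  a%:R / t%:R <= b%:R / t%:R * (c%:R / t%:R) :> rat.
Proof.
move=> t0 abc; have tpos : 0 < t%:R :> rat by rewrite ltr0n.
rewrite mulrACA -natrM -invfM ler_pdivlMr ?mulr_gt0 // mulrA divfK ?lt0r_neq0 //.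
by rewrite -natrM ler_nat.
Qed.

Lemma survivalD M t fresh k l : (0 < t)%N ->
  survival M t fresh (k + l) <= survival M t fresh k * survival M t false l.
Proof.
move=> t0; rewrite /survival; case: ifP => [_|tM]; first by rewrite mul1r.
by case: fresh; apply: ler_ratio => //; nia.
Qed.

Lemma ler_pM_ACA (R : numDomainType) (c cX cY p pX pY : R) :
  0 <= c -> 0 <= pX -> 0 <= pY -> c <= cX * cY -> p <= pX * pY ->
  c * p <= (cX * pX) * (cY * pY).
Proof.
move=> c_ge0 pX_ge0 pY_ge0 le_c le_p; rewrite mulrACA.
by apply: le_trans (ler_wpM2l c_ge0 le_p) _; rewrite ler_wpM2r ?mulr_ge0.
Qed.

Lemma sumr_count (T : Type) (s : seq T) (P : pred T) (c : rat) :
  \sum_(x <- s) (P x)%:R * c = (count P s)%:R * c.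
Proof.
rewrite -big_distrl -natr_sum; congr (_%:R * _).
by elim: s => [|x s IH]; rewrite ?big_nil ?big_cons ?IH.
Qed.

Section OneStep.
Variables (V : finType) (M t : nat) (e : {set V}) (S : seq {set V}).
Hypotheses (M_gt0 : (0 < M)%N) (S_uniq : uniq S) (e_fresh : e \notin S).

Lemma rstep_wf q : size S = minn t M -> q \in rstep M t.+1 e S ->
  [/\ 0 <= q.2, uniq q.1, size q.1 = minn t.+1 M & {subset q.1 <= e :: S}].
Proof.
move=> sizeS; rewrite /rstep; case: ifP => tM.
  rewrite inE => /eqP -> /=; split; rewrite ?e_fresh ?sizeS //; lia.
have w_ge0 : 0 <= M%:R / t.+1%:R :> rat by rewrite divr_ge0.
rewrite inE => /orP [/eqP -> /= | /mapP [x xS ->] /=]; split => //.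
- by rewrite subr_ge0 ler_pdivrMr ?ltr0n // mul1r ler_nat; lia.
- by rewrite sizeS; lia.
- by move=> y yS; rewrite inE yS orbT.
- by rewrite mulr_ge0 ?invr_ge0.
- by rewrite rem_uniq // andbT; apply: contra e_fresh => /mem_rem.
- by rewrite size_rem // sizeS; lia.
- by move=> y; rewrite !inE => /orP [-> // | /mem_rem ->]; rewrite orbT.
Qed.

Lemma rstep_sampled Z : ((M < t.+1)%N -> size S = M) ->
  \sum_(q <- rstep M t.+1 e S) (sampled Z q.1)%:R * q.2 =
  survival M t.+1 (e \in Z) #|Z :\ e| * (sampled (Z :\ e) S)%:R.
Proof.
move=> sizeS; rewrite /rstep /survival; case: (leqP t.+1 M) => [_|Mt].
  by rewrite big_seq1 /= sampled_cons mulr1 mul1r.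
rewrite big_cons big_map /=; under eq_bigr do rewrite sampled_cons sampled_rem //.
rewrite sumr_count sizeS //.
have t_neq0 : t.+1%:R != 0 :> rat by rewrite pnatr_eq0.
have M_neq0 : M%:R != 0 :> rat by rewrite pnatr_eq0 -lt0n.
case ZeS: (sampled (Z :\ e) S); last first.
  have -> : sampled Z S = false.
    by apply: contraFF ZeS; apply: sub_sampled; apply: subsetDl.
  by rewrite (eq_count (a2 := pred0)) ?count_pred0 ?mul0r ?addr0 ?mulr0.
rewrite (eq_count (a2 := [predC Z :\ e])) //.
have [-> cardZe] := count_notin_sampled S_uniq ZeS; rewrite sizeS // in cardZe *.
case eZ: (e \in Z).
  have -> : sampled Z S = false by apply: contraNF e_fresh => /sampledP; apply.
  by rewrite mul0r add0r mulr1 natrB //; field; rewrite nat1r t_neq0 M_neq0.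
have Ze : Z :\ e = Z by apply/setP => z; rewrite !inE; case: eqP => // ->; rewrite eZ.
rewrite Ze in ZeS cardZe *; have cardZt : (#|Z| <= t.+1)%N := ltnW (leq_ltn_trans cardZe Mt).
rewrite ZeS mulr1 mul1r !natrB //.
by field; rewrite nat1r t_neq0 M_neq0.
Qed.
End OneStep.

Section Trajectories.
Variables (V : finType) (M : nat) (str : seq {set V}).
Hypotheses (M_gt0 : (0 < M)%N) (str_uniq : uniq str).

Local Notation traj := (seq (seq {set V})).
Implicit Types (Z X Y L : {set {set V}}) (h : traj -> rat).

Definition expect (n : nat) (h : traj -> rat) : rat :=
  \sum_(p <- rpaths M str n) h p.1 * p.2.

Definition prob_sampled (t : nat) (Z : {set {set V}}) : rat :=
  expect t (fun P => (sampled Z (nth [::] P t))%:R).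

Lemma sedge_notin_take n : (n < size str)%N -> sedge str n.+1 \notin take n str.
Proof.
move=> lt_n; apply/negP => en.
move: str_uniq; rewrite -(cat_take_drop n.+1 str) (take_nth set0 lt_n).
by rewrite cat_uniq rcons_uniq en.
Qed.

Lemma rpaths_wf n p : (n <= size str)%N -> p \in rpaths M str n ->
  [/\ size p.1 = n.+1, 0 <= p.2, uniq (last [::] p.1),
      size (last [::] p.1) = minn n M & {subset last [::] p.1 <= take n str}].
Proof.
elim: n p => [|n IH] p le_n.
  by rewrite inE => /eqP -> /=; split; rewrite ?min0n.
move=> /flattenP [_ /mapP [p0 p0n ->] /mapP [q qstep ->]] /=.
have [size_p0 w_ge0 S_uniq sizeS S_sub] := IH p0 (ltnW le_n) p0n.
have e_fresh := sedge_notin_take le_n.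
have [q_ge0 q_uniq size_q q_sub] := rstep_wf M_gt0 S_uniq
  (contra (fun eS => S_sub _ eS) e_fresh) sizeS qstep.
rewrite size_rcons last_rcons size_p0; split => //; first exact: mulr_ge0.
move=> x /q_sub; rewrite (take_nth set0 le_n) mem_rcons !inE.
by case/orP => [-> // | /S_sub ->]; rewrite orbT.
Qed.

Lemma expect_ge0 n h : (n <= size str)%N -> (forall P, 0 <= h P) -> 0 <= expect n h.
Proof.
move=> le_n h_ge0; rewrite /expect big_seq; apply: sumr_ge0 => p pn.
by have [_ w_ge0 _ _ _] := rpaths_wf le_n pn; rewrite mulr_ge0.
Qed.

Lemma eq_expect n h g : h =1 g -> expect n h = expect n g.
Proof. by move=> hg; apply: eq_bigr => p _; rewrite hg. Qed.

Lemma expect_sampled_succ n h Z : (n < size str)%N ->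
  (forall P x, size P = n.+1 -> h (rcons P x) = h P) ->
  expect n.+1 (fun P => h P * (sampled Z (nth [::] P n.+1))%:R) =
  survival M n.+1 (sedge str n.+1 \in Z) #|Z :\ sedge str n.+1| *
  expect n (fun P => h P * (sampled (Z :\ sedge str n.+1) (nth [::] P n))%:R).
Proof.
move=> lt_n h_prefix; rewrite /expect big_flatten big_map mulr_sumr.
apply: eq_big_seq => p pn; rewrite big_map.
have [size_p _ S_uniq sizeS S_sub] := rpaths_wf (ltnW lt_n) pn.
have e_fresh := contra (fun eS => S_sub _ eS) (sedge_notin_take lt_n).
have -> : nth [::] p.1 n = last [::] p.1 by rewrite -nth_last size_p.
set S := last [::] p.1 in S_uniq sizeS e_fresh *.
transitivity (h p.1 * p.2 *
  \sum_(q <- rstep M n.+1 (sedge str n.+1) S) (sampled Z q.1)%:R * q.2).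
  rewrite mulr_sumr; apply: eq_bigr => q _ /=.
  by rewrite h_prefix // nth_rcons size_p ltnn eqxx; ring.
by rewrite rstep_sampled // ?sizeS => [|?]; [ring | lia].
Qed.

Lemma expect_succ n h : (n < size str)%N ->
  (forall P x, size P = n.+1 -> h (rcons P x) = h P) ->
  expect n.+1 h = expect n h.
Proof.
move=> lt_n h_prefix.
have drop0 k m : expect m (fun P => h P * (sampled set0 (nth [::] P k))%:R) = expect m h.
  by apply: eq_expect => P; rewrite sampled0 mulr1.
have := expect_sampled_succ set0 lt_n h_prefix.
by rewrite set0D inE cards0 survival0 // mul1r !drop0.
Qed.

Lemma expect_prefix k m h : (k <= m)%N -> (m <= size str)%N ->
  (forall P x, (k < size P)%N -> h (rcons P x) = h P) ->
  expect m h = expect k h.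
Proof.
move=> le_km le_m h_prefix; elim: m le_km le_m => [|m IH] le_km le_m.
  by move: le_km; rewrite leqn0 => /eqP ->.
have [le_k|lt_mk] := leqP k m; last by have -> : k = m.+1 by lia.
rewrite expect_succ //; first exact: IH (ltnW le_m).
by move=> P x size_P; apply: h_prefix; rewrite size_P.
Qed.

Lemma prob_sampled_succ t Z : (t < size str)%N ->
  prob_sampled t.+1 Z =
  survival M t.+1 (sedge str t.+1 \in Z) #|Z :\ sedge str t.+1| *
  prob_sampled t (Z :\ sedge str t.+1).
Proof.
move=> lt_t; have := expect_sampled_succ (h := fun=> 1) Z lt_t (fun _ _ _ => erefl).
by rewrite /prob_sampled !(eq_expect _ (fun P => mul1r _)).
Qed.

Lemma prob_sampled_ge0 t Z : (t <= size str)%N -> 0 <= prob_sampled t Z.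
Proof. by move=> le_t; apply: expect_ge0. Qed.

Lemma prob_sampledU_le t X Y : (t <= size str)%N -> [disjoint X & Y] ->
  prob_sampled t (X :|: Y) <= prob_sampled t X * prob_sampled t Y.
Proof.
elim: t X Y => [|t IH] X Y le_t XY.
  rewrite /prob_sampled /expect !big_seq1 /= !mulr1 sampledU.
  by case: (sampled X _); case: (sampled Y _).
rewrite !prob_sampled_succ // setDUl inE.
set e := sedge str t.+1.
have XYe : [disjoint X :\ e & Y :\ e] := disjointW (subsetDl _ _) (subsetDl _ _) XY.
have -> : #|X :\ e :|: Y :\ e| = (#|X :\ e| + #|Y :\ e|)%N.
  by apply/eqP; rewrite (leq_card_setU _ _).2.
have ge0 Z : 0 <= prob_sampled t Z := prob_sampled_ge0 Z (ltnW le_t).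
apply: ler_pM_ACA; rewrite ?survival_ge0 ?ge0 ?IH 1?ltnW //.
case eX: (e \in X); case eY: (e \in Y) => /=; rewrite ?survivalD //.
  by move: (disjointFr XY eX); rewrite eY.
by rewrite addnC mulrC survivalD.
Qed.

Lemma expect_sampled_same_le a L Y : (a <= size str)%N -> [disjoint L & Y] ->
  expect a (fun P => (sampled L (nth [::] P a))%:R * (sampled Y (nth [::] P a))%:R) <=
  expect a (fun P => (sampled L (nth [::] P a))%:R) * prob_sampled a Y.
Proof.
move=> le_a LY; rewrite [X in X <= _](_ : _ = prob_sampled a (L :|: Y)).
  exact: prob_sampledU_le.
by apply: eq_expect => P; rewrite sampledU -mulnb natrM.
Qed.

Lemma expect_sampled_le a t L Y : (a <= t)%N -> (t <= size str)%N -> [disjoint L & Y] ->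
  expect t (fun P => (sampled L (nth [::] P a))%:R * (sampled Y (nth [::] P t))%:R) <=
  expect t (fun P => (sampled L (nth [::] P a))%:R) * prob_sampled t Y.
Proof.
elim: t Y => [|t IH] Y le_at le_t LY.
  by move: le_at; rewrite leqn0 => /eqP ->; apply: expect_sampled_same_le.
have [->|ne_a] := eqVneq a t.+1; first exact: expect_sampled_same_le.
have le_a : (a <= t)%N by lia.
have f_prefix P x : size P = t.+1 ->
    (sampled L (nth [::] (rcons P x) a))%:R = (sampled L (nth [::] P a))%:R :> rat.
  by move=> size_P; rewrite nth_rcons size_P ltnS le_a.
rewrite (expect_sampled_succ Y le_t f_prefix) (expect_succ le_t f_prefix).
rewrite prob_sampled_succ // mulrCA ler_wpM2l ?survival_ge0 // IH ?(ltnW le_t) //.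
exact: disjointWr (subsetDl _ _) LY.
Qed.

Lemma Pr_prefix b (A : traj -> bool) : (b <= size str)%N ->
  (forall P x, (b < size P)%N -> A (rcons P x) = A P) ->
  Pr M str A = expect b (fun P => (A P)%:R).
Proof.
move=> le_b A_prefix; rewrite -(expect_prefix le_b (leqnn _)) //.
by move=> P x /A_prefix ->.
Qed.

Lemma Pr_ge0 (A : traj -> bool) : 0 <= Pr M str A.
Proof. exact: (expect_ge0 (h := fun P => (A P)%:R) (leqnn _) (fun P => ler0n _ _)). Qed.

Lemma Pr_cond_le (A B : traj -> bool) :
  Pr M str (fun P => A P && B P) <= Pr M str A * Pr M str B ->
  Pr_cond M str A B <= Pr M str A.
Proof.
rewrite /Pr_cond; have [->|PrB_neq0] := eqVneq (Pr M str B) 0.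
  by rewrite invr0 => _; rewrite mulr0; apply: Pr_ge0.
by rewrite ler_pdivrMr // lt0r PrB_neq0 Pr_ge0.
Qed.
End Trajectories.

Lemma D_eventE (V : finType) (str : seq {set V}) i j k P :
  D_event str i j k P = sampled [set sedge str i; sedge str j] (sample_at P k.-1).
Proof. by rewrite sampled2. Qed.

Lemma D_event_rcons (V : finType) (str : seq {set V}) i j k P x :
  (k.-1 < size P)%N -> D_event str i j k (rcons P x) = D_event str i j k P.
Proof. by move=> lt_k; rewrite /D_event /sample_at nth_rcons lt_k. Qed.

Theorem lemma4p14 (V : finType) (M : nat) (str : seq {set V})
  (l1 l2 l3 g1 g2 g3 : nat) :
  (6 <= M)%N ->
  valid_stream str ->
  is_triangle str l1 l2 l3 ->
  is_triangle str g1 g2 g3 ->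
  [disjoint tri_edges str l1 l2 l3 & tri_edges str g1 g2 g3] ->
  (l3 < g3)%N ->
  Pr_cond M str (D_event str g1 g2 g3) (D_event str l1 l2 l3)
    <= Pr M str (D_event str g1 g2 g3).
Proof.
move=> M6 [str_uniq _] [_ _ _ le_l3 _] [_ _ _ le_g3 _] disj lt_lg.
have M_gt0 : (0 < M)%N by lia.
apply: (Pr_cond_le M_gt0 str_uniq).
have le_b : (g3.-1 <= size str)%N by lia.
have D_prefix i j k P x : (k <= g3)%N -> (g3.-1 < size P)%N ->
    D_event str i j k (rcons P x) = D_event str i j k P.
  by move=> le_k lt_P; apply: D_event_rcons; apply: leq_ltn_trans lt_P; lia.
rewrite !(Pr_prefix M_gt0 str_uniq le_b) => [|P x lt_P|P x lt_P|P x lt_P];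
  try by rewrite ?D_prefix ?(ltnW lt_lg).
have E_D i j k : expect M str g3.-1 (fun P => (D_event str i j k P)%:R) =
    expect M str g3.-1 (fun P => (sampled [set sedge str i; sedge str j] (nth [::] P k.-1))%:R).
  by apply: eq_expect => P; rewrite D_eventE.
under eq_expect => P do rewrite andbC -mulnb natrM !D_eventE.
rewrite mulrC !E_D; apply: expect_sampled_le => //; try lia.
by apply: disjointW disj; apply/subsetP => z; rewrite !inE => /orP [] ->; rewrite ?orbT.
Qed.
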